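(* Let $m>0$, let $f(r,z)$ be a smooth function on $[\tfrac m2,\infty)\times[-1,1]$, $J,c$ constants, and $\omega=f(1-z^2)^2+J(z^3-3z)+c$ with $z=\cos\theta$. Set $K_{\varphi\theta}=\omega_{,r}/\sin\theta$, $K_{\varphi r}=-\omega_{,\theta}/(r^2\sin\theta)$, and $$P_J=2\int_{m/2}^\infty dr\,\varrho(r)\,r\int_{-1}^1\big(K_{\varphi\theta}^2+r^2K_{\varphi r}^2\big)\frac{dz}{1-z^2},\qquad \varrho(r)=\frac{m(1-\frac m{2r})}{4r^3(1+\frac m{2r})^7}.$$ Then for each $r$, $\int_{-1}^1\frac{\omega_{,z}^2}{1-z^2}dz=\int_{-1}^1\frac{\tilde\omega_{,z}^2}{1-z^2}dz+12J^2$ where $\tilde\omega=f(1-z^2)^2$, and consequently $$P_J\ge\frac{J^2}{4m^2},$$ with equality if and only if $f\equiv0$. *)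

From Stdlib Require Import Reals Lra ClassicalEpsilon.
Open Scope R_scope.

Definition cont2 (g : R -> R -> R) : Prop :=
  forall x y eps, 0 < eps -> exists d, 0 < d /\
    forall x' y', Rabs (x' - x) < d -> Rabs (y' - y) < d ->
      Rabs (g x' y' - g x y) < eps.

(* C^infinity on R^2: D i j = d^i/dx^i d^j/dy^j f, all exist and are
   jointly continuous. *)
Definition smooth2 (f : R -> R -> R) : Prop :=
  exists D : nat -> nat -> R -> R -> R,
    (forall x y, D 0%nat 0%nat x y = f x y) /\
    forall i j, cont2 (D i j) /\
      forall x y,
        derivable_pt_lim (fun s => D i j s y) x (D (S i) j x y) /\
        derivable_pt_lim (fun t => D i j x t) y (D i (S j) x y).

Definition partial1 (W : R -> R -> R) (x y : R) : R :=
  epsilon (inhabits 0) (fun d => derivable_pt_lim (fun s => W s y) x d).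
Definition partial2 (W : R -> R -> R) (x y : R) : R :=
  epsilon (inhabits 0) (fun d => derivable_pt_lim (fun t => W x t) y d).

Definition is_RInt (g : R -> R) (a b v : R) : Prop :=
  exists pr : Riemann_integrable g a b, RiemannInt pr = v.
Definition RInt (g : R -> R) (a b : R) : R :=
  epsilon (inhabits 0) (fun v => is_RInt g a b v).

Definition improper_int (h : R -> R) (a l : R) : Prop :=
  (forall b, a <= b -> exists v, is_RInt h a b v) /\
  (forall eps, 0 < eps -> exists B, forall b v,
      B <= b -> is_RInt h a b v -> Rabs (v - l) < eps).

Definition omega (f : R -> R -> R) (J c : R) (r z : R) : R :=
  f r z * (1 - z ^ 2) ^ 2 + J * (z ^ 3 - 3 * z) + c.
Definition omega_tilde (f : R -> R -> R) (r z : R) : R :=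
  f r z * (1 - z ^ 2) ^ 2.
Definition omega_th (f : R -> R -> R) (J c : R) (r th : R) : R :=
  omega f J c r (cos th).

(* K_{phi theta} = omega_{,r} / sin theta,
   K_{phi r} = - omega_{,theta} / (r^2 sin theta),  at theta = acos z. *)
Definition K_phitheta f J c (r z : R) : R :=
  partial1 (omega_th f J c) r (acos z) / sin (acos z).
Definition K_phir f J c (r z : R) : R :=
  - partial2 (omega_th f J c) r (acos z) / (r ^ 2 * sin (acos z)).

Definition rho (m r : R) : R :=
  m * (1 - m / (2 * r)) / (4 * r ^ 3 * (1 + m / (2 * r)) ^ 7).

Definition PJ_integrand (m J c : R) (f : R -> R -> R) (r : R) : R :=
  2 * rho m r * r *
  RInt (fun z => (K_phitheta f J c r z ^ 2 + r ^ 2 * K_phir f J c r z ^ 2)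
                   / (1 - z ^ 2)) (-1) 1.

(* With q := f_{,z} (1 - z^2) - 4 z f one has omega_tilde_{,z} = (1 - z^2) q and
   omega_{,z} = (1 - z^2) (q - 3 J).  Since the integral of (1 - z^2) q over [-1, 1] is
   omega_tilde(1) - omega_tilde(-1) = 0, expanding the square gives the 12 J^2 identity.
   Hence the P_J integrand is 24 J^2 rho(r) / r plus nonnegative terms, and
   rho(r) / r = 16 m r^2 (2r - m) / (2r + m)^7 has the explicit antiderivative
   -16 m r^3 / (3 (2r + m)^6), whose integral over [m/2, oo) is 1 / (96 m^2).
   For the equality case, a Cauchy-Schwarz bound on [z0, 1] shows that the remaining terms
   dominate the continuous nonnegative function 2 rho(r)/r * omega_tilde(r, z0)^2 / (1 - z0),
   which therefore integrates to 0 and vanishes; so f = 0 on the open region, hence on its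
   closure by continuity. *)

From Pilot Require Import Defs.
From Stdlib Require Import Reals Lra ClassicalEpsilon.
From Coquelicot Require Coquelicot.
Open Scope R_scope.

Section RealAnalysis.
Import Coquelicot.Coquelicot.

Lemma Defs_is_RInt_iff (g : R -> R) a b v : Defs.is_RInt g a b v <-> is_RInt g a b v.
Proof.
split.
- intros [pr <-]. rewrite <- RInt_Reals.
  apply (RInt_correct (V := R_CompleteNormedModule)), ex_RInt_Reals_1, pr.
- intros H. exists (ex_RInt_Reals_0 _ _ _ (ex_intro _ v H)).
  rewrite <- RInt_Reals. now apply is_RInt_unique.
Qed.

Lemma Defs_RInt_eq (g : R -> R) a b v : is_RInt g a b v -> Defs.RInt g a b = v.
Proof.
intros H. unfold Defs.RInt.
assert (Hex : exists v, Defs.is_RInt g a b v) by (exists v; now apply Defs_is_RInt_iff).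
apply (epsilon_spec (inhabits 0)), Defs_is_RInt_iff in Hex.
rewrite <- (is_RInt_unique (V := R_CompleteNormedModule) _ _ _ _ H).
symmetry. exact (is_RInt_unique (V := R_CompleteNormedModule) _ _ _ _ Hex).
Qed.

Lemma partial1_eq (W : R -> R -> R) x y d : is_derive (fun s => W s y) x d -> partial1 W x y = d.
Proof.
intros H%is_derive_Reals. unfold partial1.
refine (uniqueness_limite _ _ _ _ _ H). apply (epsilon_spec (inhabits 0)). now exists d.
Qed.

Lemma partial2_eq (W : R -> R -> R) x y d : is_derive (fun t => W x t) y d -> partial2 W x y = d.
Proof.
intros H%is_derive_Reals. unfold partial2.
refine (uniqueness_limite _ _ _ _ _ H). apply (epsilon_spec (inhabits 0)). now exists d.
Qed.

Lemma continuous_pos_near (g : R -> R) x : continuous g x -> 0 < g x ->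
  exists d, 0 < d /\ forall y, Rabs (y - x) < d -> 0 < g y.
Proof.
intros Hc Hpos.
destruct (Hc _ (open_gt 0 (g x) Hpos)) as [d Hd].
exists d. split; [apply cond_pos | exact Hd].
Qed.

Lemma continuous_eq0_of_dense (g : R -> R) x : continuous g x ->
  (forall d, 0 < d -> exists y, Rabs (y - x) < d /\ g y = 0) -> g x = 0.
Proof.
intros Hc Hdense. destruct (Req_dec (g x) 0) as [E | E]; [exact E | exfalso].
destruct (continuous_pos_near (fun y => Rabs (g y)) x) as [d [Hd Hnear]].
- apply (continuous_comp g Rabs); [exact Hc | apply continuous_Rabs].
- now apply Rabs_pos_lt.
- destruct (Hdense d Hd) as [y [Hy Hgy]].
  specialize (Hnear y Hy). rewrite Hgy, Rabs_R0 in Hnear. lra.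
Qed.

Lemma is_derive_eq0_locally (g : R -> R) x l :
  is_derive g x l -> locally x (fun y => g y = 0) -> l = 0.
Proof.
intros Hd Hloc.
assert (H0 : is_derive (fun _ => 0) x l).
{ apply (is_derive_ext_loc g); [|exact Hd]. exact Hloc. }
apply is_derive_unique in H0. rewrite Derive_const in H0. now symmetry.
Qed.

Lemma continuous_Rmult (g h : R -> R) x :
  continuous g x -> continuous h x -> continuous (fun y => g y * h y) x.
Proof. exact (continuous_mult g h x). Qed.

Lemma continuous_Rpow (g : R -> R) n x : continuous g x -> continuous (fun y => g y ^ n) x.
Proof.
intros Hg. induction n as [|n IH]; simpl.
- apply continuous_const.
- now apply continuous_Rmult.
Qed.

Lemma RInt_Chasles_R (g : R -> R) a b c :
  ex_RInt g a b -> ex_RInt g b c -> RInt g a c = RInt g a b + RInt g b c.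
Proof. intros Hab Hbc. symmetry. exact (RInt_Chasles g a b c Hab Hbc). Qed.

Lemma RInt_pos_of_continuous (k : R -> R) a b x :
  (forall y, a <= y <= b -> continuous k y) -> (forall y, a <= y <= b -> 0 <= k y) ->
  a < x < b -> 0 < k x -> 0 < RInt k a b.
Proof.
intros Hc Hnn Hx Hkx.
destruct (continuous_pos_near k x (Hc x ltac:(lra)) Hkx) as [d [Hd Hnear]].
set (e := Rmin d (Rmin (x - a) (b - x)) / 2).
assert (He : 0 < e /\ e < d /\ a < x - e /\ x + e < b).
{ pose proof (Rmin_l d (Rmin (x - a) (b - x))). pose proof (Rmin_r d (Rmin (x - a) (b - x))).
  pose proof (Rmin_l (x - a) (b - x)). pose proof (Rmin_r (x - a) (b - x)).
  assert (0 < Rmin d (Rmin (x - a) (b - x))) by (repeat apply Rmin_pos; lra).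
  unfold e. lra. }
assert (Hex : forall u v, a <= u <= v -> v <= b -> ex_RInt k u v).
{ intros u v Hu Hv. apply (ex_RInt_continuous (V := R_CompleteNormedModule)).
  rewrite Rmin_left, Rmax_right by lra. intros y Hy. apply Hc. lra. }
rewrite (RInt_Chasles_R k a (x - e) b), (RInt_Chasles_R k (x - e) (x + e) b)
  by (apply Hex; lra).
assert (0 <= RInt k a (x - e)).
{ apply RInt_ge_0; [lra | apply Hex; lra | intros y Hy; apply Hnn; lra]. }
assert (0 <= RInt k (x + e) b).
{ apply RInt_ge_0; [lra | apply Hex; lra | intros y Hy; apply Hnn; lra]. }
assert (0 < RInt k (x - e) (x + e)).
{ apply RInt_gt_0; [lra | | intros y Hy; apply Hc; lra].
  intros y Hy. apply Hnear, Rabs_def1; lra. }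
lra.
Qed.

Lemma improper_int_near (h : R -> R) a l : improper_int h a l ->
  forall eps, 0 < eps -> exists B, a <= B /\
    forall b, B <= b -> is_RInt h a b (RInt h a b) /\ Rabs (RInt h a b - l) < eps.
Proof.
intros [Hex Hcv] eps He. destruct (Hcv eps He) as [B HB].
exists (Rmax a B). split; [apply Rmax_l|]. intros b Hb.
pose proof (Rmax_l a B). pose proof (Rmax_r a B).
destruct (Hex b ltac:(lra)) as [v Hv].
pose proof Hv as Hv'. apply Defs_is_RInt_iff in Hv'.
rewrite (is_RInt_unique (V := R_CompleteNormedModule) _ _ _ _ Hv').
split; [exact Hv' | apply (HB b v); [lra | exact Hv]].
Qed.

Lemma improper_int_le (g h : R -> R) a lg lh :
  improper_int g a lg -> improper_int h a lh ->
  (forall x, a < x -> g x <= h x) -> lg <= lh.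
Proof.
intros Hg Hh Hle. apply Rnot_lt_le. intros Hlt.
destruct (improper_int_near g a lg Hg ((lg - lh) / 2)) as [Bg [HaBg HBg]]; [lra|].
destruct (improper_int_near h a lh Hh ((lg - lh) / 2)) as [Bh [_ HBh]]; [lra|].
set (b := Rmax Bg Bh).
destruct (HBg b (Rmax_l _ _)) as [Ig Eg], (HBh b (Rmax_r _ _)) as [Ih Eh].
assert (RInt g a b <= RInt h a b).
{ apply (is_RInt_le g h a b _ _ (Rle_trans _ _ _ HaBg (Rmax_l _ _)) Ig Ih).
  intros x Hx. apply Hle, Hx. }
apply Rabs_def2 in Eg, Eh. lra.
Qed.

Lemma improper_int_gap_eq0 (g h k : R -> R) a l :
  improper_int g a l -> improper_int h a l ->
  (forall x, a <= x -> continuous k x) -> (forall x, a <= x -> 0 <= k x) ->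
  (forall x, a < x -> g x + k x <= h x) ->
  forall x, a < x -> k x = 0.
Proof.
intros Hg Hh Hc Hnn Hle x Hx.
destruct (Rle_lt_or_eq_dec 0 (k x) (Hnn x (Rlt_le _ _ Hx))) as [Hpos | <-]; [exfalso | reflexivity].
set (c := RInt k a (x + 1)).
assert (Hc_pos : 0 < c).
{ apply (RInt_pos_of_continuous k a (x + 1) x); try (intros; apply Hc || apply Hnn); lra. }
destruct (improper_int_near g a l Hg (c / 2)) as [Bg [HaBg HBg]]; [lra|].
destruct (improper_int_near h a l Hh (c / 2)) as [Bh [_ HBh]]; [lra|].
pose proof (Rmax_l (x + 1) (Rmax Bg Bh)). pose proof (Rmax_r (x + 1) (Rmax Bg Bh)).
pose proof (Rmax_l Bg Bh). pose proof (Rmax_r Bg Bh).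
set (b := Rmax (x + 1) (Rmax Bg Bh)) in *.
destruct (HBg b ltac:(lra)) as [Ig Eg], (HBh b ltac:(lra)) as [Ih Eh].
assert (Hex : forall u v, a <= u <= v -> ex_RInt k u v).
{ intros u v Hu. apply (ex_RInt_continuous (V := R_CompleteNormedModule)).
  rewrite Rmin_left, Rmax_right by lra. intros y Hy. apply Hc. lra. }
assert (Hck : c <= RInt k a b).
{ rewrite (RInt_Chasles_R k a (x + 1) b) by (apply Hex; lra).
  assert (0 <= RInt k (x + 1) b) by (apply RInt_ge_0; [lra | apply Hex; lra | intros y Hy; apply Hnn; lra]).
  fold c. lra. }
assert (RInt g a b + RInt k a b <= RInt h a b).
{ apply (is_RInt_le _ h a b _ _ ltac:(lra)
    (is_RInt_plus _ _ _ _ _ _ Ig (RInt_correct (V := R_CompleteNormedModule) k a b (Hex a b ltac:(lra)))) Ih).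
  intros y Hy. apply Hle, Hy. }
apply Rabs_def2 in Eg, Eh. lra.
Qed.

Lemma improper_int_ext (g h : R -> R) a l :
  (forall x, a < x -> g x = h x) -> improper_int g a l -> improper_int h a l.
Proof.
intros Heq [Hex Hcv].
assert (Htransfer : forall b v, a <= b -> Defs.is_RInt g a b v <-> Defs.is_RInt h a b v).
{ intros b v Hb. rewrite !Defs_is_RInt_iff.
  split; apply is_RInt_ext; rewrite Rmin_left, Rmax_right by lra;
    intros x Hx; [|symmetry]; apply Heq; lra. }
split.
- intros b Hb. destruct (Hex b Hb) as [v Hv]. exists v. now apply Htransfer.
- intros eps He. destruct (Hcv eps He) as [B HB]. exists (Rmax a B).
  intros b v Hb Hv. pose proof (Rmax_l a B). pose proof (Rmax_r a B).
  apply (HB b v); [lra|]. apply (Htransfer b v); [lra | exact Hv].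
Qed.

Lemma improper_int_of_antiderivative (F g : R -> R) a L :
  (forall x, a <= x -> is_derive F x (g x)) -> (forall x, a <= x -> continuous g x) ->
  (forall eps, 0 < eps -> exists B, forall b, B <= b -> Rabs (F b - L) < eps) ->
  improper_int g a (L - F a).
Proof.
intros HF Hc Hlim.
assert (HI : forall b, a <= b -> Defs.is_RInt g a b (F b - F a)).
{ intros b Hb. apply Defs_is_RInt_iff.
  apply (is_RInt_derive (V := R_CompleteNormedModule)); rewrite Rmin_left, Rmax_right by lra.
  - intros x Hx. apply HF. lra.
  - intros x Hx. apply Hc. lra. }
split.
- intros b Hb. exists (F b - F a). now apply HI.
- intros eps He. destruct (Hlim eps He) as [B HB]. exists (Rmax a B).
  intros b v Hb Hv. pose proof (Rmax_l a B). pose proof (Rmax_r a B).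
  assert (E : v = F b - F a).
  { specialize (HI b ltac:(lra)).
    apply Defs_is_RInt_iff, Defs_RInt_eq in Hv, HI. congruence. }
  replace (v - (L - F a)) with (F b - L) by (rewrite E; ring). apply HB. lra.
Qed.

End RealAnalysis.

Lemma rho_rational m r : 0 < m -> 0 < r ->
  rho m r = 16 * m * r ^ 3 * (2 * r - m) / (2 * r + m) ^ 7.
Proof.
intros Hm Hr. unfold rho.
assert (2 * r + m <> 0) by lra.
replace (1 + m / (2 * r)) with ((2 * r + m) / (2 * r)) by (field; lra).
field. lra.
Qed.

Lemma rho_nonneg m r : 0 < m -> m / 2 <= r -> 0 <= rho m r.
Proof.
intros Hm Hr. rewrite rho_rational by lra.
apply Rmult_le_pos; [|apply Rlt_le, Rinv_0_lt_compat, pow_lt; lra].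
repeat apply Rmult_le_pos; try apply pow_le; lra.
Qed.

Lemma rho_div_nonneg m r : 0 < m -> m / 2 <= r -> 0 <= rho m r / r.
Proof.
intros Hm Hr. apply Rmult_le_pos; [now apply rho_nonneg | apply Rlt_le, Rinv_0_lt_compat; lra].
Qed.

Lemma rho_pos m r : 0 < m -> m / 2 < r -> 0 < rho m r.
Proof.
intros Hm Hr. rewrite rho_rational by lra.
apply Rdiv_lt_0_compat; [|apply pow_lt; lra].
repeat apply Rmult_lt_0_compat; try apply pow_lt; lra.
Qed.

Lemma rho_antiderivative_bound m b : 0 < m -> 1 <= b ->
  0 <= 16 * m * b ^ 3 / (3 * (2 * b + m) ^ 6) <= m / (3 * b).
Proof.
intros Hm Hb.
assert (Ht : 0 < (2 * b + m) ^ 6) by (apply pow_lt; lra).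
assert (H6 : (2 * b) ^ 6 <= (2 * b + m) ^ 6) by (apply pow_incr; lra).
assert (H4 : 16 * b ^ 4 <= (2 * b) ^ 6).
{ assert (1 <= b ^ 2) by nra. assert (0 < b ^ 4) by (apply pow_lt; lra).
  replace ((2 * b) ^ 6) with (64 * b ^ 4 * b ^ 2) by ring. nra. }
split.
- apply Rmult_le_pos; [|apply Rlt_le, Rinv_0_lt_compat]; [repeat apply Rmult_le_pos; try apply pow_le|]; lra.
- enough (0 <= m / (3 * b) - 16 * m * b ^ 3 / (3 * (2 * b + m) ^ 6)) by lra.
  replace (m / (3 * b) - 16 * m * b ^ 3 / (3 * (2 * b + m) ^ 6))
    with (m * ((2 * b + m) ^ 6 - 16 * b ^ 4) * / (3 * b * (2 * b + m) ^ 6)) by (field; lra).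
  apply Rmult_le_pos; [apply Rmult_le_pos; lra|].
  apply Rlt_le, Rinv_0_lt_compat. apply Rmult_lt_0_compat; lra.
Qed.

Section RadialIntegral.
Import Coquelicot.Coquelicot.

Lemma improper_int_rho_div_r m K : 0 < m ->
  improper_int (fun r => K * (rho m r / r)) (m / 2) (K / (96 * m ^ 2)).
Proof.
intros Hm.
set (F := fun r => - (K * (16 * m * r ^ 3 / (3 * (2 * r + m) ^ 6)))).
apply (improper_int_ext (fun r => K * (16 * m * r ^ 2 * (2 * r - m) / (2 * r + m) ^ 7))).
{ intros r Hr. rewrite rho_rational by lra. field. lra. }
replace (K / (96 * m ^ 2)) with (0 - F (m / 2)) by (unfold F; field; lra).
apply improper_int_of_antiderivative.
- intros r Hr. assert (0 < 2 * r + m) by lra. unfold F. auto_derive.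
  + apply Rgt_not_eq. repeat apply Rmult_lt_0_compat; lra.
  + field. lra.
- intros r Hr. assert (0 < 2 * r + m) by lra.
  apply (ex_derive_continuous (V := R_NormedModule)). auto_derive.
  apply Rgt_not_eq. repeat apply Rmult_lt_0_compat; lra.
- intros eps He. exists (1 + Rabs K * m / (3 * eps)). intros b Hb.
  assert (0 <= Rabs K * m / (3 * eps)).
  { apply Rmult_le_pos; [apply Rmult_le_pos; [apply Rabs_pos | lra] | apply Rlt_le, Rinv_0_lt_compat; lra]. }
  destruct (rho_antiderivative_bound m b Hm ltac:(lra)) as [H0 H1].
  unfold F. rewrite Rminus_0_r, Rabs_Ropp, Rabs_mult, (Rabs_right (_ / _)) by lra.
  apply Rle_lt_trans with (Rabs K * (m / (3 * b))); [apply Rmult_le_compat_l; [apply Rabs_pos | lra]|].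
  apply (Rmult_lt_reg_r (3 * b)); [lra|].
  replace (Rabs K * (m / (3 * b)) * (3 * b)) with (3 * eps * (Rabs K * m / (3 * eps))) by (field; lra).
  nra.
Qed.

End RadialIntegral.

Lemma sin_acos_pos_sq z : -1 < z < 1 -> 0 < sin (acos z) /\ sin (acos z) ^ 2 = 1 - z ^ 2.
Proof.
intros Hz. rewrite sin_acos by lra.
assert (0 < 1 - z²) by (unfold Rsqr; nra).
split; [now apply sqrt_lt_R0|].
rewrite <- Rsqr_pow2, Rsqr_sqrt by lra. unfold Rsqr. ring.
Qed.

(* The bound of [B_lower_bound] below, carried through the radial weight of P_J. *)
Definition PJ_tilde_lower (m : R) (f : R -> R -> R) (z0 r : R) : R :=
  2 * (rho m r / r) * (omega_tilde f r z0 ^ 2 / (1 - z0)).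

Section PJIntegrand.
Import Coquelicot.Coquelicot.

Variables (f fr fz : R -> R -> R) (J c : R).
Hypothesis f_dr : forall r z, is_derive (fun s => f s z) r (fr r z).
Hypothesis f_dz : forall r z, is_derive (fun t => f r t) z (fz r z).
Hypothesis fr_cont : forall r z, continuous (fun t => fr r t) z.
Hypothesis fz_cont : forall r z, continuous (fun t => fz r t) z.

Let q r z := fz r z * (1 - z ^ 2) - 4 * z * f r z.
Let A r := RInt (fun z => fr r z ^ 2 * (1 - z ^ 2) ^ 2) (-1) 1.
Let B r := RInt (fun z => (1 - z ^ 2) * q r z ^ 2) (-1) 1.

Lemma omega_tilde_dz r z : is_derive (fun t => omega_tilde f r t) z ((1 - z ^ 2) * q r z).
Proof.
unfold omega_tilde, q. pose proof (f_dz r z) as H.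
auto_derive; [now exists (fz r z)|].
rewrite (is_derive_unique (fun t : R => f r t) z _ H). ring.
Qed.

Lemma omega_dz r z : is_derive (fun t => omega f J c r t) z ((1 - z ^ 2) * (q r z - 3 * J)).
Proof.
unfold omega, q. pose proof (f_dz r z) as H.
auto_derive; [now exists (fz r z)|].
rewrite (is_derive_unique (fun t : R => f r t) z _ H). ring.
Qed.

Lemma omega_th_dr r th :
  is_derive (fun s => omega_th f J c s th) r (fr r (cos th) * (1 - cos th ^ 2) ^ 2).
Proof.
unfold omega_th, omega. pose proof (f_dr r (cos th)) as H.
auto_derive; [now exists (fr r (cos th))|].
rewrite (is_derive_unique (fun s : R => f s (cos th)) r _ H). ring.
Qed.

Lemma omega_th_dth r th :
  is_derive (fun t => omega_th f J c r t) th ((1 - cos th ^ 2) * (q r (cos th) - 3 * J) * - sin th).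
Proof.
unfold omega_th.
replace ((1 - cos th ^ 2) * (q r (cos th) - 3 * J) * - sin th)
  with (scal (- sin th) ((1 - cos th ^ 2) * (q r (cos th) - 3 * J)))
  by (unfold scal; simpl; unfold mult; simpl; ring).
apply (is_derive_comp (fun u => omega f J c r u) cos); [apply omega_dz | apply is_derive_cos].
Qed.

Lemma f_cont_r r z : continuous (fun s => f s z) r.
Proof. apply (ex_derive_continuous (V := R_NormedModule)). exists (fr r z). apply f_dr. Qed.

Lemma f_cont_z r z : continuous (fun t => f r t) z.
Proof. apply (ex_derive_continuous (V := R_NormedModule)). exists (fz r z). apply f_dz. Qed.

Lemma continuous_one_minus_sq z : continuous (fun t => 1 - t ^ 2) z.
Proof. apply (ex_derive_continuous (V := R_NormedModule)). auto_derive. easy. Qed.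

Lemma q_cont r z : continuous (q r) z.
Proof.
apply (continuous_minus (V := R_NormedModule)); apply continuous_Rmult.
- apply fz_cont.
- apply continuous_one_minus_sq.
- apply (ex_derive_continuous (V := R_NormedModule)). auto_derive. easy.
- apply f_cont_z.
Qed.

Lemma ex_RInt_A r a b : ex_RInt (fun z => fr r z ^ 2 * (1 - z ^ 2) ^ 2) a b.
Proof.
apply (ex_RInt_continuous (V := R_CompleteNormedModule)). intros z _.
apply continuous_Rmult; [apply continuous_Rpow, fr_cont | apply continuous_Rpow, continuous_one_minus_sq].
Qed.

Lemma ex_RInt_B r a b : ex_RInt (fun z => (1 - z ^ 2) * q r z ^ 2) a b.
Proof.
apply (ex_RInt_continuous (V := R_CompleteNormedModule)). intros z _.
apply continuous_Rmult; [apply continuous_one_minus_sq | apply continuous_Rpow, q_cont].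
Qed.

Lemma is_RInt_omega_tilde_dz r : is_RInt (fun z => (1 - z ^ 2) * q r z) (-1) 1 0.
Proof.
replace 0 with (omega_tilde f r 1 - omega_tilde f r (-1)) by (unfold omega_tilde; ring).
apply (is_RInt_derive (V := R_CompleteNormedModule) (fun t => omega_tilde f r t)).
- intros z _. apply omega_tilde_dz.
- intros z _. apply continuous_Rmult; [apply continuous_one_minus_sq | apply q_cont].
Qed.

Lemma is_RInt_one_minus_sq : is_RInt (fun z => 1 - z ^ 2) (-1) 1 (4 / 3).
Proof.
replace (4 / 3) with ((1 - 1 ^ 3 / 3) - (-1 - (-1) ^ 3 / 3)) by field.
apply (is_RInt_derive (V := R_CompleteNormedModule) (fun t => t - t ^ 3 / 3)).
- intros z _. auto_derive; [easy | field].
- intros z _. apply continuous_one_minus_sq.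
Qed.

Lemma is_RInt_omega_dz_sq r :
  is_RInt (fun z => (1 - z ^ 2) * (q r z - 3 * J) ^ 2) (-1) 1 (B r + 12 * J ^ 2).
Proof.
pose proof (is_RInt_plus _ _ _ _ _ _
  (is_RInt_plus _ _ _ _ _ _ (RInt_correct (V := R_CompleteNormedModule) _ _ _ (ex_RInt_B r (-1) 1))
     (is_RInt_scal _ _ _ (-6 * J) _ (is_RInt_omega_tilde_dz r)))
  (is_RInt_scal _ _ _ (9 * J ^ 2) _ is_RInt_one_minus_sq)) as H.
replace (B r + 12 * J ^ 2) with
  (plus (plus (B r) (scal (-6 * J) 0)) (scal (9 * J ^ 2) (4 / 3)))
  by (unfold plus, scal; simpl; unfold mult; simpl; field).
eapply is_RInt_ext; [|exact H].
intros z _. unfold plus, scal; simpl. unfold mult; simpl. ring.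
Qed.

Lemma omega_dz_sq_div r z : -1 < z < 1 ->
  partial2 (omega f J c) r z ^ 2 / (1 - z ^ 2) = (1 - z ^ 2) * (q r z - 3 * J) ^ 2.
Proof. intros Hz. rewrite (partial2_eq _ _ _ _ (omega_dz r z)). field. nra. Qed.

Lemma omega_tilde_dz_sq_div r z : -1 < z < 1 ->
  partial2 (omega_tilde f) r z ^ 2 / (1 - z ^ 2) = (1 - z ^ 2) * q r z ^ 2.
Proof. intros Hz. rewrite (partial2_eq _ _ _ _ (omega_tilde_dz r z)). field. nra. Qed.

Lemma omega_dz_sq_integral r :
  exists vA vB,
    Defs.is_RInt (fun z => partial2 (omega f J c) r z ^ 2 / (1 - z ^ 2)) (-1) 1 vA /\
    Defs.is_RInt (fun z => partial2 (omega_tilde f) r z ^ 2 / (1 - z ^ 2)) (-1) 1 vB /\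
    vA = vB + 12 * J ^ 2.
Proof.
exists (B r + 12 * J ^ 2), (B r).
split; [|split; [|reflexivity]]; apply Defs_is_RInt_iff.
- eapply is_RInt_ext; [|apply is_RInt_omega_dz_sq].
  intros z Hz. rewrite Rmin_left, Rmax_right in Hz by lra.
  symmetry. now apply omega_dz_sq_div.
- eapply is_RInt_ext; [|apply (RInt_correct (V := R_CompleteNormedModule)), ex_RInt_B].
  intros z Hz. rewrite Rmin_left, Rmax_right in Hz by lra.
  symmetry. now apply omega_tilde_dz_sq_div.
Qed.

Lemma PJ_inner_integrand_eq r z : r <> 0 -> -1 < z < 1 ->
  (K_phitheta f J c r z ^ 2 + r ^ 2 * K_phir f J c r z ^ 2) / (1 - z ^ 2)
  = fr r z ^ 2 * (1 - z ^ 2) ^ 2 + / r ^ 2 * ((1 - z ^ 2) * (q r z - 3 * J) ^ 2).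
Proof.
intros Hr Hz. unfold K_phitheta, K_phir.
rewrite (partial1_eq _ _ _ _ (omega_th_dr r (acos z))),
  (partial2_eq _ _ _ _ (omega_th_dth r (acos z))), cos_acos by lra.
destruct (sin_acos_pos_sq z Hz) as [Hs <-].
field. lra.
Qed.

Lemma PJ_integrand_eq m r : r <> 0 ->
  PJ_integrand m J c f r = 2 * rho m r * r * (A r + / r ^ 2 * (B r + 12 * J ^ 2)).
Proof.
intros Hr. unfold PJ_integrand. f_equal. apply Defs_RInt_eq.
eapply is_RInt_ext; [|apply (is_RInt_plus _ _ _ _ _ _
  (RInt_correct (V := R_CompleteNormedModule) _ _ _ (ex_RInt_A r (-1) 1))
  (is_RInt_scal _ _ _ (/ r ^ 2) _ (is_RInt_omega_dz_sq r)))].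
intros z Hz. rewrite Rmin_left, Rmax_right in Hz by lra.
symmetry. now apply PJ_inner_integrand_eq.
Qed.

Lemma B_lower_bound r z0 : -1 < z0 < 1 -> omega_tilde f r z0 ^ 2 / (1 - z0) <= B r.
Proof.
intros Hz0. set (w := omega_tilde f r z0). set (k := - w / (1 - z0)).
assert (Hex : forall a b, ex_RInt (fun z => (1 - z ^ 2) * q r z ^ 2) a b) by apply ex_RInt_B.
unfold B. rewrite (RInt_Chasles_R _ (-1) z0 1) by apply Hex.
assert (0 <= RInt (fun z => (1 - z ^ 2) * q r z ^ 2) (-1) z0).
{ apply RInt_ge_0; [lra | apply Hex | intros z Hz].
  apply Rmult_le_pos; [nra | apply pow2_ge_0]. }
(* (1 - z^2) q^2 >= ((1 - z^2) q)^2 >= 2 k (1 - z^2) q - k^2, and the last expression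
   integrates exactly because (1 - z^2) q = omega_tilde_{,z}; k is the optimal choice. *)
assert (HI : is_RInt (fun z => 2 * k * ((1 - z ^ 2) * q r z) - k ^ 2) z0 1 (w ^ 2 / (1 - z0))).
{ replace (w ^ 2 / (1 - z0)) with
    ((2 * k * omega_tilde f r 1 - k ^ 2 * 1) - (2 * k * omega_tilde f r z0 - k ^ 2 * z0))
    by (unfold k, w, omega_tilde; field; lra).
  apply (is_RInt_derive (V := R_CompleteNormedModule) (fun t => 2 * k * omega_tilde f r t - k ^ 2 * t)).
  - intros z _. pose proof (omega_tilde_dz r z) as Hd.
    auto_derive; [now exists ((1 - z ^ 2) * q r z)|].
    rewrite (is_derive_unique (fun t : R => omega_tilde f r t) z _ Hd). ring.
  - intros z _. apply (continuous_minus (V := R_NormedModule)); [|apply continuous_const].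
    apply continuous_Rmult; [apply continuous_const|].
    apply continuous_Rmult; [apply continuous_one_minus_sq | apply q_cont]. }
assert (w ^ 2 / (1 - z0) <= RInt (fun z => (1 - z ^ 2) * q r z ^ 2) z0 1).
{ apply (is_RInt_le _ _ z0 1 _ _ ltac:(lra) HI
    (RInt_correct (V := R_CompleteNormedModule) _ _ _ (Hex z0 1))).
  intros z Hz. assert (0 < 1 - z ^ 2 <= 1) by nra.
  pose proof (pow2_ge_0 ((1 - z ^ 2) * q r z - k)).
  assert (0 <= (1 - z ^ 2) * z ^ 2 * q r z ^ 2) by (apply Rmult_le_pos; [nra | apply pow2_ge_0]).
  nra. }
lra.
Qed.

Lemma PJ_integrand_ge m r z0 : 0 < m -> m / 2 <= r -> -1 < z0 < 1 ->
  24 * J ^ 2 * (rho m r / r) + PJ_tilde_lower m f z0 r <= PJ_integrand m J c f r.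
Proof.
intros Hm Hr Hz0. rewrite PJ_integrand_eq by lra. unfold PJ_tilde_lower.
pose proof (rho_nonneg m r Hm Hr).
pose proof (rho_div_nonneg m r Hm Hr).
assert (0 <= A r).
{ apply RInt_ge_0; [lra | apply ex_RInt_A | intros z _].
  apply Rmult_le_pos; apply pow2_ge_0. }
pose proof (B_lower_bound r z0 Hz0).
replace (2 * rho m r * r * (A r + / r ^ 2 * (B r + 12 * J ^ 2)))
  with (2 * rho m r * r * A r + 2 * (rho m r / r) * B r + 24 * J ^ 2 * (rho m r / r))
  by (field; lra).
assert (0 <= 2 * rho m r * r * A r) by (apply Rmult_le_pos; [apply Rmult_le_pos |]; lra).
assert (2 * (rho m r / r) * (omega_tilde f r z0 ^ 2 / (1 - z0)) <= 2 * (rho m r / r) * B r)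
  by (apply Rmult_le_compat_l; lra).
lra.
Qed.

Lemma PJ_tilde_lower_cont m z0 r : 0 < m -> m / 2 <= r -> z0 < 1 ->
  continuous (PJ_tilde_lower m f z0) r.
Proof.
intros Hm Hr Hz0. apply (ex_derive_continuous (V := R_NormedModule)).
unfold PJ_tilde_lower, rho, omega_tilde. pose proof (f_dr r z0) as H.
assert (0 < m / (2 * r)) by (apply Rdiv_lt_0_compat; lra).
auto_derive.
repeat split; try (now exists (fr r z0)); apply Rgt_not_eq; repeat apply Rmult_lt_0_compat; lra.
Qed.

Lemma PJ_tilde_lower_nonneg m z0 r : 0 < m -> m / 2 <= r -> z0 < 1 ->
  0 <= PJ_tilde_lower m f z0 r.
Proof.
intros Hm Hr Hz0. unfold PJ_tilde_lower. pose proof (rho_div_nonneg m r Hm Hr).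
apply Rmult_le_pos; [lra|].
apply Rmult_le_pos; [apply pow2_ge_0 | apply Rlt_le, Rinv_0_lt_compat; lra].
Qed.

Lemma PJ_tilde_lower_eq0 m z0 r : 0 < m -> m / 2 < r -> -1 < z0 < 1 ->
  PJ_tilde_lower m f z0 r = 0 -> f r z0 = 0.
Proof.
intros Hm Hr Hz0 H. destruct (Req_dec (f r z0) 0) as [E | E]; [exact E | exfalso].
revert H. apply Rgt_not_eq. unfold PJ_tilde_lower, omega_tilde.
assert (0 < rho m r / r) by (apply Rdiv_lt_0_compat; [apply rho_pos|]; lra).
apply Rmult_lt_0_compat; [lra|]. apply Rdiv_lt_0_compat; [|lra].
apply pow2_gt_0, Rmult_integral_contrapositive_currified; [exact E|].
apply pow_nonzero. nra.
Qed.

Lemma f_eq0_closure a : (forall r z, a < r -> -1 < z < 1 -> f r z = 0) ->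
  forall r z, a <= r -> -1 <= z <= 1 -> f r z = 0.
Proof.
intros H0.
assert (Hopen : forall r z, a <= r -> -1 < z < 1 -> f r z = 0).
{ intros r z Hr Hz. apply (continuous_eq0_of_dense (fun s => f s z)); [apply f_cont_r|].
  intros d Hd. exists (r + d / 2). split; [|apply H0; lra].
  replace (r + d / 2 - r) with (d / 2) by ring. rewrite Rabs_right; lra. }
intros r z Hr Hz. apply (continuous_eq0_of_dense (fun t => f r t)); [apply f_cont_z|].
intros d Hd. set (e := Rmin d 1 / 2).
assert (0 < e < d /\ e <= 1 / 2).
{ pose proof (Rmin_l d 1). pose proof (Rmin_r d 1). pose proof (Rmin_pos d 1 Hd ltac:(lra)).
  unfold e. lra. }
exists (z * (1 - e)). split; [apply Rabs_def1; nra | apply Hopen; nra].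
Qed.

Lemma PJ_integrand_of_f_eq0 m r : 0 < m -> m / 2 < r ->
  (forall r z, m / 2 <= r -> -1 <= z <= 1 -> f r z = 0) ->
  PJ_integrand m J c f r = 24 * J ^ 2 * (rho m r / r).
Proof.
intros Hm Hr H0. rewrite PJ_integrand_eq by lra.
assert (RInt_eq0 : forall g : R -> R, (forall z, -1 < z < 1 -> g z = 0) -> RInt g (-1) 1 = 0).
{ intros g Hg. rewrite (RInt_ext g (fun _ => 0)).
  - rewrite RInt_const. unfold scal; simpl; unfold mult; simpl. ring.
  - intros z Hz. rewrite Rmin_left, Rmax_right in Hz by lra. now apply Hg. }
assert (HA : A r = 0).
{ apply RInt_eq0. intros z Hz.
  rewrite (is_derive_eq0_locally _ _ _ (f_dr r z)); [ring|].
  apply (locally_interval _ r (m / 2) p_infty); [simpl; lra | easy |].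
  intros y Hy _. apply H0; simpl in Hy; lra. }
assert (HB : B r = 0).
{ apply RInt_eq0. intros z Hz. unfold q.
  rewrite H0, (is_derive_eq0_locally _ _ _ (f_dz r z)); [ring | | lra | lra].
  apply (locally_interval _ z (-1) 1); [simpl; lra | simpl; lra |].
  intros y Hy1 Hy2. apply H0; simpl in *; lra. }
rewrite HA, HB. field. lra.
Qed.

End PJIntegrand.

Section SmoothPartials.
Import Coquelicot.Coquelicot.

Lemma smooth2_partials (f : R -> R -> R) : smooth2 f ->
  exists fr fz : R -> R -> R,
    (forall r z, is_derive (fun s => f s z) r (fr r z)) /\
    (forall r z, is_derive (fun t => f r t) z (fz r z)) /\
    (forall r z, continuous (fun t => fr r t) z) /\
    (forall r z, continuous (fun t => fz r t) z).
Proof.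
intros [D [HD0 HD]]. exists (D 1%nat 0%nat), (D 0%nat 1%nat).
split; [|split; [|split]]; intros r z.
- apply (is_derive_ext (fun s => D 0%nat 0%nat s z)); [intros s; apply HD0|].
  apply is_derive_Reals, HD.
- apply (is_derive_ext (fun t => D 0%nat 0%nat r t)); [intros t; apply HD0|].
  apply is_derive_Reals, HD.
- apply (ex_derive_continuous (V := R_NormedModule)).
  exists (D 1%nat 1%nat r z). apply is_derive_Reals, HD.
- apply (ex_derive_continuous (V := R_NormedModule)).
  exists (D 0%nat 2%nat r z). apply is_derive_Reals, HD.
Qed.

End SmoothPartials.

Theorem mainTheorem5 (m J c : R) (f : R -> R -> R)
  (hm : 0 < m) (hf : smooth2 f) :
  (forall r, m / 2 <= r ->
     exists vA vB,
       is_RInt (fun z => partial2 (omega f J c) r z ^ 2 / (1 - z ^ 2)) (-1) 1 vA /\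
       is_RInt (fun z => partial2 (omega_tilde f) r z ^ 2 / (1 - z ^ 2)) (-1) 1 vB /\
       vA = vB + 12 * J ^ 2) /\
  (forall l, improper_int (PJ_integrand m J c f) (m / 2) l ->
     J ^ 2 / (4 * m ^ 2) <= l) /\
  (improper_int (PJ_integrand m J c f) (m / 2) (J ^ 2 / (4 * m ^ 2)) <->
     (forall r z, m / 2 <= r -> -1 <= z <= 1 -> f r z = 0)).
Proof.
destruct (smooth2_partials f hf) as [fr [fz [f_dr [f_dz [fr_cont fz_cont]]]]].
assert (HJ : improper_int (fun r => 24 * J ^ 2 * (rho m r / r)) (m / 2) (J ^ 2 / (4 * m ^ 2))).
{ replace (J ^ 2 / (4 * m ^ 2)) with (24 * J ^ 2 / (96 * m ^ 2)) by (field; lra).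
  now apply improper_int_rho_div_r. }
assert (Hge : forall z0 r, -1 < z0 < 1 -> m / 2 < r ->
  24 * J ^ 2 * (rho m r / r) + PJ_tilde_lower m f z0 r <= PJ_integrand m J c f r).
{ intros z0 r Hz0 Hr. eapply PJ_integrand_ge; eauto; lra. }
split; [|split].
- intros r _. eapply omega_dz_sq_integral; eauto.
- intros l Hl. apply (improper_int_le _ _ _ _ _ HJ Hl).
  intros r Hr. assert (0 <= PJ_tilde_lower m f 0 r) by (apply PJ_tilde_lower_nonneg; lra).
  pose proof (Hge 0 r ltac:(lra) Hr). lra.
- split.
  + intros Hl. eapply f_eq0_closure; eauto.
    intros r z Hr Hz. eapply PJ_tilde_lower_eq0; eauto.
    apply (improper_int_gap_eq0 _ _ _ _ _ HJ Hl); auto; intros x Hx.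
    * eapply PJ_tilde_lower_cont; eauto; lra.
    * apply PJ_tilde_lower_nonneg; lra.
  + intros H0. eapply improper_int_ext; [|exact HJ].
    intros r Hr. symmetry. eapply PJ_integrand_of_f_eq0; eauto.
Qed.
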